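(* Let $G:\mathbb{R}^2\to\mathbb{C}$ be quasi-periodic, and let $K,N\geq 8$ be integers and $(x,y)\in[0,1/K)\times[0,1/N)$. Assume $G(x+i/K,\,y+j/N)\neq 0$ for all $(i,j)\in\mathbb{Z}^2$, and let $H:\mathbb{R}^2\to\mathbb{R}$ be any function with $G=|G|e^{2\pi i H}$ at these points. Set $h_{i,j}=H(x+i/K,\,y+j/N)$ for $(i,j)\in\mathbb{Z}^2$. Then there exist integers $0\le i<K$ and $0\le j<N$ such that either $$\operatorname{dist}(h_{i+1,j}-h_{i,j},\mathbb{Z})>\tfrac18\quad\text{or}\quad \operatorname{dist}(h_{i,j+1}-h_{i,j},\mathbb{Z})>\tfrac18.$$
   Context: A function $G$ on $\mathbb{R}^2$ is quasi-periodic if $G(x,y+1)=G(x,y)$ and $G(x+1,y)=e^{2\pi i y}G(x,y)$ for all $(x,y)\in\mathbb{R}^2$. *)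

From Stdlib Require Import Reals ZArith.
Open Scope R_scope.

(* complex numbers as (real part, imaginary part) *)
Definition Cplx : Type := (R * R)%type.
Definition Cmul (z w : Cplx) : Cplx :=
  (fst z * fst w - snd z * snd w, fst z * snd w + snd z * fst w).
Definition Cscale (r : R) (z : Cplx) : Cplx := (r * fst z, r * snd z).
Definition Cnorm (z : Cplx) : R := sqrt (fst z * fst z + snd z * snd z).
Definition C0 : Cplx := (0, 0).
Definition e2pi (t : R) : Cplx := (cos (2 * PI * t), sin (2 * PI * t)).

Definition quasi_periodic (G : R -> R -> Cplx) : Prop :=
  forall x y : R, G x (y + 1) = G x y /\ G (x + 1) y = Cmul (e2pi y) (G x y).

Definition distZ (t : R) : R :=
  Rmin (t - IZR (Int_part t)) (IZR (Int_part t) + 1 - t).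

From Stdlib Require Import Reals ZArith Lra Lia Classical.
Open Scope R_scope.

(* Proof idea (a discrete winding-number argument).
   Write [red t] for the representative of [t] modulo Z in [-1/2, 1/2), and
   alpha i j = red (h (i+1) j - h i j),  beta i j = red (h i (j+1) - h i j).
   Suppose, for a contradiction, that every increment inside the fundamental
   block [0,K) x [0,N) is within 1/8 of an integer, i.e. |alpha|, |beta| <= 1/8.
   1. Quasi-periodicity of G and uniqueness of the polar phase up to integers
      give the boundary relations
        h i (j+N) = h i j  (mod Z)   and   h (i+K) j = h i j + y + j/N  (mod Z).
   2. Around each unit square the four reduced increments sum to an integer of
      absolute value < 1, hence to 0 (discrete "zero curl").
   3. The row sums A j = sum_{i<K} alpha i j therefore telescope:
      A (j+1) - A j = beta K j - beta 0 j = 1/N by the twisted boundary relation,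
      so A N = A 0 + 1, while N-periodicity gives A N = A 0.
   The file first develops reduction mod Z, then the grid argument for an
   arbitrary real array with these boundary relations, then the facts about
   polar phases; the theorem combines the two. *)

Definition isZ (t : R) : Prop := exists k : Z, t = IZR k.

Lemma isZ_plus a b : isZ a -> isZ b -> isZ (a + b).
Proof. intros [k ->] [l ->]. exists (k + l)%Z. now rewrite plus_IZR. Qed.

Lemma isZ_opp a : isZ a -> isZ (- a).
Proof. intros [k ->]. exists (- k)%Z. now rewrite opp_IZR. Qed.

Lemma isZ_minus a b : isZ a -> isZ b -> isZ (a - b).
Proof. intros Ha Hb. now apply isZ_plus, isZ_opp. Qed.

Lemma isZ_small t : isZ t -> Rabs t < 1 -> t = 0.
Proof.
  intros [k ->] Ha. apply Rabs_def2 in Ha. destruct Ha as [H1 H2].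
  assert (k < 1)%Z by (apply lt_IZR; simpl; lra).
  assert (-1 < k)%Z by (apply lt_IZR; simpl; lra).
  now replace k with 0%Z by lia.
Qed.

Lemma Int_part_unique k s : IZR k <= s < IZR k + 1 -> Int_part s = k.
Proof.
  intros [H1 H2]. unfold Int_part.
  rewrite <- (tech_up s (k + 1)); [ring| |]; rewrite plus_IZR; simpl; lra.
Qed.

Definition red (t : R) : R := t - IZR (Int_part (t + / 2)).

Lemma red_int t : isZ (t - red t).
Proof. exists (Int_part (t + / 2)). unfold red. ring. Qed.

Lemma red_bound t : - / 2 <= red t < / 2.
Proof. unfold red. destruct (base_Int_part (t + / 2)). lra. Qed.

Lemma red_shift t s : isZ (t - s) -> red t = red s.
Proof.
  intros Hz. enough (red t - red s = 0) by lra.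
  apply isZ_small.
  - replace (red t - red s) with ((t - s) - (t - red t) + (s - red s)) by ring.
    apply isZ_plus; [apply isZ_minus|]; auto using red_int.
  - pose proof (red_bound t); pose proof (red_bound s). apply Rabs_def1; lra.
Qed.

Lemma red_id t : - / 2 <= t < / 2 -> red t = t.
Proof.
  intros Ht. unfold red. rewrite (Int_part_unique 0); simpl; lra.
Qed.

Lemma red_small t : distZ t <= 1 / 8 -> Rabs (red t) <= 1 / 8.
Proof.
  unfold distZ, red, Rmin. destruct (base_Int_part t) as [B1 B2].
  destruct (Rle_dec _ _); intros Hd; apply Rabs_le.
  - rewrite (Int_part_unique (Int_part t)); lra.
  - rewrite (Int_part_unique (Int_part t + 1)); rewrite ?plus_IZR; simpl; lra.
Qed.

Lemma Rabs_le_bounds t b : Rabs t <= b -> - b <= t <= b.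
Proof. unfold Rabs; destruct (Rcase_abs t); lra. Qed.

Fixpoint partial_sum (f : nat -> R) (n : nat) : R :=
  match n with O => 0 | S m => partial_sum f m + f m end.

Lemma partial_sum_ext f g n : (forall m, f m = g m) -> partial_sum f n = partial_sum g n.
Proof.
  intros E. induction n as [|n IH]; cbn [partial_sum]; [reflexivity|].
  now rewrite IH, E.
Qed.

Section TwistedGrid.

Variable h : Z -> Z -> R.
Variables K N : nat.
Variable c : R.

Hypothesis K_pos : (0 < K)%nat.
Hypothesis N_large : (8 <= N)%nat.
Hypothesis period_j : forall i, isZ (h i (Z.of_nat N) - h i 0).
Hypothesis twist_i : forall j, isZ (h (Z.of_nat K) j - h 0 j - (c + IZR j / INR N)).

Definition alpha i j := red (h (i + 1)%Z j - h i j).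
Definition beta i j := red (h i (j + 1)%Z - h i j).

Hypothesis small : forall i j, (0 <= i < Z.of_nat K)%Z -> (0 <= j < Z.of_nat N)%Z ->
  Rabs (alpha i j) <= 1 / 8 /\ Rabs (beta i j) <= 1 / 8.

(* The twist 1/N is small compared with the slack left by the 1/8 bounds. *)
Let N_real : 8 <= INR N.
Proof. replace 8 with (INR 8) by (simpl; ring). apply le_INR; lia. Qed.

Let inv_N_bound : 0 < / INR N <= 1 / 8.
Proof.
  split; [apply Rinv_0_lt_compat; lra|].
  replace (1 / 8) with (/ 8) by field. apply Rinv_le_contravar; lra.
Qed.

Lemma alpha_periodic i : alpha i (Z.of_nat N) = alpha i 0.
Proof.
  unfold alpha. apply red_shift.
  replace (h (i + 1)%Z (Z.of_nat N) - h i (Z.of_nat N) - (h (i + 1)%Z 0 - h i 0))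
    with ((h (i + 1)%Z (Z.of_nat N) - h (i + 1)%Z 0) - (h i (Z.of_nat N) - h i 0))
    by ring.
  now apply isZ_minus.
Qed.

Lemma beta_twist j : (0 <= j < Z.of_nat N)%Z ->
  beta (Z.of_nat K) j = beta 0 j + / INR N.
Proof.
  intros Hj.
  assert (Hshift : isZ ((h (Z.of_nat K) (j + 1)%Z - h (Z.of_nat K) j)
                        - (beta 0 j + / INR N))).
  { replace ((h (Z.of_nat K) (j + 1)%Z - h (Z.of_nat K) j) - (beta 0 j + / INR N))
      with ((h (Z.of_nat K) (j + 1)%Z - h 0 (j + 1)%Z - (c + IZR (j + 1) / INR N))
            - (h (Z.of_nat K) j - h 0 j - (c + IZR j / INR N))
            + ((h 0 (j + 1)%Z - h 0 j) - beta 0 j))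
      by (rewrite plus_IZR; unfold beta; field; lra).
    apply isZ_plus; [apply isZ_minus|]; auto using red_int. }
  unfold beta at 1. rewrite (red_shift _ _ Hshift). apply red_id.
  pose proof (Rabs_le_bounds _ _ (proj2 (small 0 j ltac:(lia) Hj))). lra.
Qed.

Lemma alpha_bound i j : (0 <= i < Z.of_nat K)%Z -> (0 <= j <= Z.of_nat N)%Z ->
  Rabs (alpha i j) <= 1 / 8.
Proof.
  intros Hi Hj. destruct (Z.eq_dec j (Z.of_nat N)) as [->|Hne].
  - rewrite alpha_periodic. apply (small i 0); lia.
  - apply (small i j); lia.
Qed.

Lemma beta_bound i j : (0 <= i <= Z.of_nat K)%Z -> (0 <= j < Z.of_nat N)%Z ->
  Rabs (beta i j) <= 1 / 4.
Proof.
  intros Hi Hj. destruct (Z.eq_dec i (Z.of_nat K)) as [->|Hne].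
  - rewrite (beta_twist j Hj).
    pose proof (Rabs_le_bounds _ _ (proj2 (small 0 j ltac:(lia) Hj))).
    apply Rabs_le; lra.
  - pose proof (proj2 (small i j ltac:(lia) Hj)). lra.
Qed.

Lemma plaquette i j : (0 <= i < Z.of_nat K)%Z -> (0 <= j < Z.of_nat N)%Z ->
  alpha i j + beta (i + 1)%Z j - alpha i (j + 1)%Z - beta i j = 0.
Proof.
  intros Hi Hj. apply isZ_small.
  - unfold alpha, beta.
    set (t1 := h (i + 1)%Z j - h i j).
    set (t2 := h (i + 1)%Z (j + 1)%Z - h (i + 1)%Z j).
    set (t3 := h (i + 1)%Z (j + 1)%Z - h i (j + 1)%Z).
    set (t4 := h i (j + 1)%Z - h i j).
    replace (red t1 + red t2 - red t3 - red t4)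
      with (- ((t1 - red t1) + (t2 - red t2) - (t3 - red t3) - (t4 - red t4)))
      by (unfold t1, t2, t3, t4; ring).
    apply isZ_opp, isZ_minus; [apply isZ_minus; [apply isZ_plus|]|];
      apply red_int.
  - pose proof (Rabs_le_bounds _ _ (alpha_bound i j ltac:(lia) ltac:(lia))).
    pose proof (Rabs_le_bounds _ _ (alpha_bound i (j + 1) ltac:(lia) ltac:(lia))).
    pose proof (Rabs_le_bounds _ _ (beta_bound i j ltac:(lia) Hj)).
    pose proof (Rabs_le_bounds _ _ (beta_bound (i + 1) j ltac:(lia) Hj)).
    apply Rabs_def1; lra.
Qed.

Definition row_sum (j : Z) : R := partial_sum (fun m => alpha (Z.of_nat m) j) K.

(* By zero curl, two consecutive partial row sums differ by the vertical
   increments at the two ends; at the end of the block this is the twist 1/N. *)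
Lemma row_sum_step j : (0 <= j < Z.of_nat N)%Z ->
  row_sum (j + 1)%Z = row_sum j + / INR N.
Proof.
  intros Hj.
  assert (Telescope : forall m, (m <= K)%nat ->
    partial_sum (fun i => alpha (Z.of_nat i) j) m
    - partial_sum (fun i => alpha (Z.of_nat i) (j + 1)%Z) m
    = beta 0 j - beta (Z.of_nat m) j).
  { induction m as [|m IH]; intros Hm; cbn [partial_sum].
    - simpl. ring.
    - rewrite Nat2Z.inj_succ. unfold Z.succ.
      pose proof (IH ltac:(lia)).
      pose proof (plaquette (Z.of_nat m) j ltac:(lia) Hj). lra. }
  unfold row_sum. pose proof (Telescope K (le_n K)). rewrite beta_twist in * by exact Hj.
  lra.
Qed.

Lemma row_sum_linear m : (m <= N)%nat -> row_sum (Z.of_nat m) = row_sum 0 + INR m / INR N.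
Proof.
  induction m as [|m IH]; intros Hm.
  - simpl. unfold Rdiv. ring.
  - rewrite Nat2Z.inj_succ, S_INR. unfold Z.succ.
    rewrite row_sum_step, IH by lia. field. lra.
Qed.

Lemma twisted_grid_contradiction : False.
Proof.
  assert (Hperiod : row_sum (Z.of_nat N) = row_sum 0).
  { apply partial_sum_ext. intros m. apply alpha_periodic. }
  rewrite row_sum_linear in Hperiod by lia.
  assert (INR N / INR N = 1) by (field; lra).
  lra.
Qed.

End TwistedGrid.

Lemma Cmul_e2pi a b r : Cmul (e2pi a) (Cscale r (e2pi b)) = Cscale r (e2pi (a + b)).
Proof.
  unfold Cmul, Cscale, e2pi; simpl.
  replace (2 * PI * (a + b)) with (2 * PI * a + 2 * PI * b) by ring.
  rewrite cos_plus, sin_plus. f_equal; ring.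
Qed.

Lemma polar_phase_unique r r' u v : 0 < r -> 0 < r' ->
  Cscale r (e2pi u) = Cscale r' (e2pi v) -> isZ (u - v).
Proof.
  intros Hr Hr' E. unfold Cscale, e2pi in E; simpl in E. injection E as E1 E2.
  pose proof (sin2_cos2 (2 * PI * u)) as T1. pose proof (sin2_cos2 (2 * PI * v)) as T2.
  unfold Rsqr in T1, T2.
  assert (Err : r * r = r' * r').
  { transitivity ((r * cos (2 * PI * u)) ^ 2 + (r * sin (2 * PI * u)) ^ 2).
    - replace (r * r) with (r * r * 1) by ring. rewrite <- T1. ring.
    - rewrite E1, E2. replace (r' * r') with (r' * r' * 1) by ring. rewrite <- T2. ring. }
  assert (r = r') by nra. subst r'.
  apply Rmult_eq_reg_l in E1; [|lra]. apply Rmult_eq_reg_l in E2; [|lra].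
  assert (Cd : cos (2 * (PI * (u - v))) = 1).
  { replace (2 * (PI * (u - v))) with (2 * PI * u - 2 * PI * v) by ring.
    rewrite cos_minus, E1, E2. lra. }
  rewrite cos_2a_sin in Cd.
  assert (Sd : sin (PI * (u - v)) = 0) by nra.
  destruct (sin_eq_0_0 _ Sd) as [k Hk]. exists k.
  pose proof PI_RGT_0.
  apply (Rmult_eq_reg_l PI); [|lra]. rewrite Hk. ring.
Qed.

Lemma norm_pos (z : Cplx) t : z <> C0 -> z = Cscale (Cnorm z) (e2pi t) -> 0 < Cnorm z.
Proof.
  intros Hz E. destruct (Rle_lt_or_eq_dec 0 (Cnorm z)) as [Hlt|Heq].
  - apply sqrt_pos.
  - exact Hlt.
  - exfalso. apply Hz. rewrite E, <- Heq. unfold Cscale, C0. f_equal; ring.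
Qed.

Lemma phase_rotation (z w : Cplx) u v a :
  z <> C0 -> w <> C0 ->
  z = Cscale (Cnorm z) (e2pi u) -> w = Cscale (Cnorm w) (e2pi v) ->
  z = Cmul (e2pi a) w -> isZ (u - v - a).
Proof.
  intros Hz Hw Ez Ew Ezw.
  replace (u - v - a) with (u - (a + v)) by ring.
  apply (polar_phase_unique (Cnorm z) (Cnorm w)); eauto using norm_pos.
  rewrite <- Ez, <- Cmul_e2pi, <- Ew. exact Ezw.
Qed.

Lemma Cmul_e2pi_0 w : Cmul (e2pi 0) w = w.
Proof.
  destruct w as [a b]. unfold Cmul, e2pi; simpl.
  rewrite Rmult_0_r, cos_0, sin_0. f_equal; ring.
Qed.

Theorem lemma2 (G : R -> R -> Cplx) (K N : nat) (x y : R) (H : R -> R -> R) :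
  quasi_periodic G ->
  (8 <= K)%nat -> (8 <= N)%nat ->
  0 <= x < 1 / INR K -> 0 <= y < 1 / INR N ->
  (forall i j : Z, G (x + IZR i / INR K) (y + IZR j / INR N) <> C0) ->
  (forall i j : Z,
     G (x + IZR i / INR K) (y + IZR j / INR N) =
     Cscale (Cnorm (G (x + IZR i / INR K) (y + IZR j / INR N)))
            (e2pi (H (x + IZR i / INR K) (y + IZR j / INR N)))) ->
  let h := fun i j : Z => H (x + IZR i / INR K) (y + IZR j / INR N) in
  exists i j : Z,
    (0 <= i < Z.of_nat K)%Z /\ (0 <= j < Z.of_nat N)%Z /\
    (distZ (h (i + 1)%Z j - h i j) > 1 / 8 \/
     distZ (h i (j + 1)%Z - h i j) > 1 / 8).
Proof.
  intros Hq HK HN _ _ Hnz Hpol h.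
  assert (HKr : 0 < INR K) by (apply lt_0_INR; lia).
  assert (HNr : 0 < INR N) by (apply lt_0_INR; lia).
  (* A full period in a grid direction is a unit step of the argument of G. *)
  assert (Ex : x + IZR (Z.of_nat K) / INR K = (x + IZR 0 / INR K) + 1)
    by (rewrite <- INR_IZR_INZ; field; lra).
  assert (Ey : y + IZR (Z.of_nat N) / INR N = (y + IZR 0 / INR N) + 1)
    by (rewrite <- INR_IZR_INZ; field; lra).
  apply NNPP; intro Hnone.
  apply (twisted_grid_contradiction h K N y ltac:(lia) HN).
  - intros i. rewrite <- (Rminus_0_r (h i (Z.of_nat N) - h i 0%Z)).
    apply phase_rotation with (G (x + IZR i / INR K) (y + IZR (Z.of_nat N) / INR N))
      (G (x + IZR i / INR K) (y + IZR 0 / INR N)); auto.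
    rewrite Cmul_e2pi_0, Ey. apply Hq.
  - intros j. apply phase_rotation with (G (x + IZR (Z.of_nat K) / INR K) (y + IZR j / INR N))
      (G (x + IZR 0 / INR K) (y + IZR j / INR N)); auto.
    rewrite Ex. apply Hq.
  - intros i j Hi Hj. split; apply red_small, Rnot_gt_le; intro Hbig;
      apply Hnone; exists i, j; tauto.
Qed.
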